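(* Let $\mathcal{Q}$ be a small involutive quantaloid. The full inclusion of the symmetrically complete symmetric $\mathcal{Q}$-categories into $\mathsf{SymCat}(\mathcal{Q})$ admits a left adjoint. Explicitly, for a symmetric $\mathcal{Q}$-category $\mathbb{A}$ the reflection is $\mathbb{A}_{\mathsf{sc}}$, the full subcategory of the Cauchy completion $\mathbb{A}_{\mathsf{cc}}$ on the symmetric left adjoint presheaves, and the unit at $\mathbb{A}$ is the functor $Y_{\mathbb{A}}\colon\mathbb{A}\to\mathbb{A}_{\mathsf{sc}}$, $x\mapsto\mathbb{A}(-,x)$.
   Context: A quantaloid is a category enriched in $\mathsf{Sup}$; an involution is an identity-on-objects, direction-reversing, monotone map $f\mapsto f^{\mathsf o}$ on morphisms with $(g\circ f)^{\mathsf o}=f^{\mathsf o}\circ g^{\mathsf o}$, $f^{\mathsf{oo}}=f$. A $\mathcal{Q}$-category $\mathbb{A}$: objects with types $tx\in\mathcal{Q}_0$, homs $\mathbb{A}(y,x)\colon tx\to ty$ with $\mathbb{A}(z,y)\circ\mathbb{A}(y,x)\le\mathbb{A}(z,x)$, $1_{tx}\le\mathbb{A}(x,x)$; symmetric if $\mathbb{A}(x,y)=\mathbb{A}(y,x)^{\mathsf o}$. Functors: type-preserving object maps $F$ with $\mathbb{A}(y,x)\le\mathbb{B}(Fy,Fx)$; $\mathsf{SymCat}(\mathcal{Q})$ is the category of symmetric $\mathcal{Q}$-categories and functors. Distributors $\Phi\colon\mathbb{A}\to\mathbb{B}$: arrows $\Phi(y,x)\colon tx\to ty$ compatible with the homs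 on both sides; composition $(\Psi\otimes\Phi)(z,x)=\bigvee_y\Psi(z,y)\circ\Phi(y,x)$; left adjoint with right adjoint $\Phi^*$ if $\mathbb{A}\le\Phi^*\otimes\Phi$, $\Phi\otimes\Phi^*\le\mathbb{B}$. For symmetric $\mathbb{A},\mathbb{B}$: $\Phi^{\mathsf o}(x,y)=\Phi(y,x)^{\mathsf o}$, and $\Phi$ is a symmetric left adjoint if left adjoint to $\Phi^{\mathsf o}$. $*_X$: one object of type $X$, hom $1_X$; a presheaf is a distributor $*_X\to\mathbb{A}$; it is representable if it equals $\mathbb{A}(-,a)$. $\mathbb{A}_{\mathsf{cc}}$: objects the left adjoint presheaves $\phi\colon *_X\to\mathbb{A}$ (type $X$), hom $\mathbb{A}_{\mathsf{cc}}(\psi,\phi)$ the unique element of $\psi^*\otimes\phi$. A symmetric $\mathbb{A}$ is symmetrically complete if every symmetric left adjoint presheaf on $\mathbb{A}$ is representable (equivalently, for every symmetric $\mathbb{B}$, $F\mapsto\mathbb{A}(-,F-)$ gives an equivalence between functors $\mathbb{B}\to\mathbb{A}$ and symmetric left adjoint distributors $\mathbb{B}\to\mathbb{A}$). *)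

Set Implicit Arguments.
Unset Strict Implicit.

Record Quantaloid := {
  qob : Type;
  qhom : qob -> qob -> Type;
  qle : forall X Y, qhom X Y -> qhom X Y -> Prop;
  qsup : forall X Y, (qhom X Y -> Prop) -> qhom X Y;
  qcomp : forall X Y Z, qhom Y Z -> qhom X Y -> qhom X Z;
  qid : forall X, qhom X X;
  qle_refl : forall X Y (f : qhom X Y), qle f f;
  qle_trans : forall X Y (f g h : qhom X Y), qle f g -> qle g h -> qle f h;
  qle_antisym : forall X Y (f g : qhom X Y), qle f g -> qle g f -> f = g;
  qsup_ub : forall X Y (S : qhom X Y -> Prop) f, S f -> qle f (qsup S);
  qsup_least : forall X Y (S : qhom X Y -> Prop) g,
      (forall f, S f -> qle f g) -> qle (qsup S) g;
  qcompA : forall W X Y Z (h : qhom Y Z) (g : qhom X Y) (f : qhom W X),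
      qcomp h (qcomp g f) = qcomp (qcomp h g) f;
  qcomp1l : forall X Y (f : qhom X Y), qcomp (qid Y) f = f;
  qcomp1r : forall X Y (f : qhom X Y), qcomp f (qid X) = f;
  qcomp_supr : forall X Y Z (g : qhom Y Z) (S : qhom X Y -> Prop),
      qcomp g (qsup S) = qsup (fun h => exists f, S f /\ h = qcomp g f);
  qcomp_supl : forall X Y Z (S : qhom Y Z -> Prop) (f : qhom X Y),
      qcomp (qsup S) f = qsup (fun h => exists g, S g /\ h = qcomp g f);
  qinv : forall X Y, qhom X Y -> qhom Y X;
  qinv_mono : forall X Y (f g : qhom X Y), qle f g -> qle (qinv f) (qinv g);
  qinv_comp : forall X Y Z (g : qhom Y Z) (f : qhom X Y),
      qinv (qcomp g f) = qcomp (qinv f) (qinv g);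
  qinv_inv : forall X Y (f : qhom X Y), qinv (qinv f) = f
}.

Arguments qhom : clear implicits.
Arguments qle {q X Y}.
Arguments qsup {q X Y}.
Arguments qcomp {q X Y Z}.
Arguments qid {q}.
Arguments qinv {q X Y}.

Unset Implicit Arguments.
Section QCats.
Variable Q : Quantaloid.

Definition cast {X X' Y Y' : qob Q} (e1 : X = X') (e2 : Y = Y')
  (f : qhom Q X Y) : qhom Q X' Y' :=
  match e1 in _ = X1, e2 in _ = Y1 return qhom Q X1 Y1 with
  | eq_refl, eq_refl => f end.

Record QCat := {
  cobj : Type;
  cty : cobj -> qob Q;
  chom : forall y x : cobj, qhom Q (cty x) (cty y)
}.

Definition is_QCat (A : QCat) : Prop :=
  (forall x y z, qle (qcomp (chom A z y) (chom A y x)) (chom A z x)) /\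
  (forall x, qle (qid (cty A x)) (chom A x x)).

Definition symmetric (A : QCat) : Prop :=
  forall x y, chom A x y = qinv (chom A y x).

Record Functor (A B : QCat) := {
  fmap :> cobj A -> cobj B;
  ftype : forall x, cty B (fmap x) = cty A x
}.
Arguments fmap {A B}.
Arguments ftype {A B}.

Definition is_functor {A B : QCat} (F : Functor A B) : Prop :=
  forall y x, qle (chom A y x)
                  (cast (ftype F x) (ftype F y) (chom B (F y) (F x))).

Definition fcomp {A B C : QCat} (G : Functor B C) (F : Functor A B)
  : Functor A C :=
  {| fmap := fun x => G (F x);
     ftype := fun x => eq_trans (ftype G (F x)) (ftype F x) |}.

Definition fiso {A B : QCat} (F G : Functor A B) : Prop :=
  forall x,
    qle (qid (cty A x)) (cast (ftype G x) (ftype F x) (chom B (F x) (G x))) /\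
    qle (qid (cty A x)) (cast (ftype F x) (ftype G x) (chom B (G x) (F x))).

Definition Dist (A B : QCat) : Type :=
  forall (y : cobj B) (x : cobj A), qhom Q (cty A x) (cty B y).

Definition is_dist {A B : QCat} (Phi : Dist A B) : Prop :=
  (forall y' y x, qle (qcomp (chom B y' y) (Phi y x)) (Phi y' x)) /\
  (forall y x x', qle (qcomp (Phi y x) (chom A x x')) (Phi y x')).

Definition dcomp {A B C : QCat} (Psi : Dist B C) (Phi : Dist A B) : Dist A C :=
  fun z x => qsup (fun h => exists y, h = qcomp (Psi z y) (Phi y x)).

Definition dle {A B : QCat} (Phi Phi' : Dist A B) : Prop :=
  forall y x, qle (Phi y x) (Phi' y x).

Definition didd (A : QCat) : Dist A A := chom A.

Definition adjoint {A B : QCat} (Phi : Dist A B) (Psi : Dist B A) : Prop :=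
  dle (didd A) (dcomp Psi Phi) /\ dle (dcomp Phi Psi) (didd B).

Definition ddual {A B : QCat} (Phi : Dist A B) : Dist B A :=
  fun x y => qinv (Phi y x).

Definition star (X : qob Q) : QCat :=
  {| cobj := unit; cty := fun _ => X; chom := fun _ _ => qid X |}.

Definition presheaf (A : QCat) (X : qob Q) : Type := Dist (star X) A.

Definition representable {A : QCat} {X : qob Q} (phi : presheaf A X) : Prop :=
  exists (a : cobj A) (e : cty A a = X),
    forall y, phi y tt = cast e eq_refl (chom A y a).

Definition sym_left_adjoint {A B : QCat} (Phi : Dist A B) : Prop :=
  adjoint Phi (ddual Phi).

Definition sym_complete (A : QCat) : Prop :=
  forall (X : qob Q) (phi : presheaf A X),
    is_dist phi -> sym_left_adjoint phi -> representable phi.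

(* Cauchy completion A_cc: objects are left adjoint presheaves phi
   (together with their -- unique -- right adjoint phi^* ), of type X;
   A_cc(psi, phi) = the unique element of psi^* (x) phi. *)
Record cc_obj (A : QCat) := {
  cc_ty : qob Q;
  cc_ps : presheaf A cc_ty;
  cc_radj : Dist A (star cc_ty);
  cc_ps_dist : is_dist cc_ps;
  cc_radj_dist : is_dist cc_radj;
  cc_adj : adjoint cc_ps cc_radj
}.
Arguments cc_ty {A}.
Arguments cc_ps {A}.
Arguments cc_radj {A}.

Definition Acc (A : QCat) : QCat :=
  {| cobj := cc_obj A;
     cty := @cc_ty A;
     chom := fun psi phi => dcomp (cc_radj psi) (cc_ps phi) tt tt |}.

Definition Asc (A : QCat) : QCat :=
  {| cobj := { p : cc_obj A | sym_left_adjoint (cc_ps p) };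
     cty := fun p => cc_ty (proj1_sig p);
     chom := fun q p => chom (Acc A) (proj1_sig q) (proj1_sig p) |}.

End QCats.

Arguments cast {Q X X' Y Y'}.
Arguments cobj {Q}.
Arguments cty {Q}.
Arguments chom {Q}.
Arguments is_QCat {Q}.
Arguments symmetric {Q}.
Arguments Functor {Q}.
Arguments fmap {Q A B}.
Arguments ftype {Q A B}.
Arguments is_functor {Q A B}.
Arguments fcomp {Q A B C}.
Arguments fiso {Q A B}.
Arguments Dist {Q}.
Arguments is_dist {Q A B}.
Arguments dcomp {Q A B C}.
Arguments dle {Q A B}.
Arguments didd {Q}.
Arguments adjoint {Q A B}.
Arguments ddual {Q A B}.
Arguments star {Q}.
Arguments presheaf {Q}.
Arguments representable {Q A X}.
Arguments sym_left_adjoint {Q A B}.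
Arguments sym_complete {Q}.
Arguments cc_obj {Q}.
Arguments cc_ty {Q A}.
Arguments cc_ps {Q A}.
Arguments cc_radj {Q A}.
Arguments Acc {Q}.
Arguments Asc {Q}.

(* In a symmetric A the right adjoint of a symmetric left adjoint presheaf p is its dual p^o,
   and A_sc is dense under the Yoneda embedding Y: A_sc(Y y, p) = p(y), A_sc(p, Y y) = p^o(y),
   and 1 <= \/_y p^o(y) o p(y).  Hence a symmetric left adjoint presheaf on A_sc restricts along Y
   to a symmetric left adjoint presheaf on A, i.e. an object of A_sc, which represents it.  Given
   F : A -> B with B symmetrically complete, B(-,F-) (x) p is a symmetric left adjoint presheaf
   on B for every p in A_sc, and its representing object is the extension G(p); by density two
   functors agreeing on the image of Y agree up to isomorphism. *)

From Stdlib Require Import ClassicalEpsilon.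

Notation "\join_ i , F" := (qsup (fun h => exists i, h = F))
  (at level 200, i binder, F at level 200).

Section QuantaloidFacts.
Context {Q : Quantaloid}.

Lemma qsup_pair {X Y} {f g : qhom Q X Y} :
  qle f g -> qsup (fun k => k = f \/ k = g) = g.
Proof.
  intros Hfg. apply qle_antisym.
  - apply qsup_least. intros k [-> | ->]; [exact Hfg | apply qle_refl].
  - apply qsup_ub. right; reflexivity.
Qed.

Lemma qcomp_monor {X Y Z} (h : qhom Q Y Z) (f g : qhom Q X Y) :
  qle f g -> qle (qcomp h f) (qcomp h g).
Proof.
  intros Hfg. rewrite <- (qsup_pair Hfg), qcomp_supr.
  apply qsup_ub. exists f. split; [left|]; reflexivity.
Qed.

Lemma qcomp_monol {X Y Z} (h : qhom Q X Y) (f g : qhom Q Y Z) :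
  qle f g -> qle (qcomp f h) (qcomp g h).
Proof.
  intros Hfg. rewrite <- (qsup_pair Hfg), qcomp_supl.
  apply qsup_ub. exists f. split; [left|]; reflexivity.
Qed.

Lemma qcomp_mono {X Y Z} (f f' : qhom Q X Y) (g g' : qhom Q Y Z) :
  qle f f' -> qle g g' -> qle (qcomp g f) (qcomp g' f').
Proof.
  intros Hf Hg. eapply qle_trans; [apply qcomp_monor, Hf | apply qcomp_monol, Hg].
Qed.

Lemma le_qjoin {I : Type} {X Y} (F : I -> qhom Q X Y) g i :
  qle g (F i) -> qle g (\join_ j, F j).
Proof. intros H. eapply qle_trans; [exact H|]. apply qsup_ub. exists i; reflexivity. Qed.

Lemma qjoin_le {I : Type} {X Y} (F : I -> qhom Q X Y) g :
  (forall i, qle (F i) g) -> qle (\join_ i, F i) g.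
Proof. intros H. apply qsup_least. intros f [i ->]. apply H. Qed.

Lemma eq_qjoin {I : Type} {X Y} (F G : I -> qhom Q X Y) :
  (forall i, F i = G i) -> (\join_ i, F i) = (\join_ i, G i).
Proof.
  intros E. apply qle_antisym; apply qjoin_le; intros i;
    apply (le_qjoin _ _ i); rewrite E; apply qle_refl.
Qed.

Lemma qcomp_joinr_le {I : Type} {X Y Z} (F : I -> qhom Q X Y) (g : qhom Q Y Z) c :
  (forall i, qle (qcomp g (F i)) c) -> qle (qcomp g (\join_ i, F i)) c.
Proof.
  intros H. rewrite qcomp_supr. apply qsup_least. intros k [f [[i ->] ->]]. apply H.
Qed.

Lemma qcomp_joinl_le {I : Type} {X Y Z} (F : I -> qhom Q Y Z) (g : qhom Q X Y) c :
  (forall i, qle (qcomp (F i) g) c) -> qle (qcomp (\join_ i, F i) g) c.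
Proof.
  intros H. rewrite qcomp_supl. apply qsup_least. intros k [f [[i ->] ->]]. apply H.
Qed.

Lemma qinv_le {X Y} (f : qhom Q X Y) g : qle f (qinv g) -> qle (qinv f) g.
Proof. intros H. rewrite <- (qinv_inv g). apply qinv_mono, H. Qed.

Lemma qinv_join {I : Type} {X Y} (F : I -> qhom Q X Y) :
  qinv (\join_ i, F i) = \join_ i, qinv (F i).
Proof.
  apply qle_antisym.
  - apply qinv_le, qjoin_le. intros i. rewrite <- (qinv_inv (F i)).
    apply qinv_mono, (le_qjoin (fun j => qinv (F j)) _ i), qle_refl.
  - apply qjoin_le. intros i. apply qinv_mono, (le_qjoin F _ i), qle_refl.
Qed.

Lemma qinv_id (X : qob Q) : qinv (qid X) = qid X.
Proof.
  transitivity (qcomp (qinv (qid X)) (qinv (qinv (qid X)))).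
  - rewrite qinv_inv, qcomp1r. reflexivity.
  - rewrite <- qinv_comp, qcomp1r. apply qinv_inv.
Qed.

Lemma cast_comp {X X' Y Y' Z Z' : qob Q}
  (e1 : X = X') (e2 : Y = Y') (e3 : Z = Z') (f : qhom Q X Y) (g : qhom Q Y Z) :
  qcomp (cast e2 e3 g) (cast e1 e2 f) = cast e1 e3 (qcomp g f).
Proof. destruct e1, e2, e3. reflexivity. Qed.

Lemma cast_compl {X X' Y Z : qob Q} (e : X = X') (f : qhom Q X Y) (g : qhom Q Y Z) :
  qcomp g (cast e eq_refl f) = cast e eq_refl (qcomp g f).
Proof. destruct e. reflexivity. Qed.

Lemma cast_mono {X X' Y Y' : qob Q} (e1 : X = X') (e2 : Y = Y') (f g : qhom Q X Y) :
  qle f g -> qle (cast e1 e2 f) (cast e1 e2 g).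
Proof. destruct e1, e2. auto. Qed.

Lemma cast_inv {X X' Y Y' : qob Q} (e1 : X = X') (e2 : Y = Y') (f : qhom Q X Y) :
  qinv (cast e1 e2 f) = cast e2 e1 (qinv f).
Proof. destruct e1, e2. reflexivity. Qed.

Lemma cast_join {I : Type} {X X' Y Y' : qob Q} (e1 : X = X') (e2 : Y = Y')
  (F : I -> qhom Q X Y) :
  cast e1 e2 (\join_ i, F i) = \join_ i, cast e1 e2 (F i).
Proof. destruct e1, e2. reflexivity. Qed.

Lemma cast_split {X X' Y Y' : qob Q} (e1 : X = X') (e2 : Y = Y') (f : qhom Q X Y) :
  cast e1 e2 f = cast eq_refl e2 (cast e1 eq_refl f).
Proof. destruct e1, e2. reflexivity. Qed.

End QuantaloidFacts.

Section CauchyCompletion.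
Context {Q : Quantaloid} {A : QCat Q}.

Lemma cc_ps_compat (p : cc_obj A) y' y :
  qle (qcomp (chom A y' y) (cc_ps p y tt)) (cc_ps p y' tt).
Proof. apply (proj1 (cc_ps_dist _ _ p)). Qed.

Lemma cc_radj_compat (p : cc_obj A) x x' :
  qle (qcomp (cc_radj p tt x) (chom A x x')) (cc_radj p tt x').
Proof. apply (proj2 (cc_radj_dist _ _ p)). Qed.

Lemma cc_unit (p : cc_obj A) :
  qle (qid (cc_ty p)) (\join_ y, qcomp (cc_radj p tt y) (cc_ps p y tt)).
Proof. apply (proj1 (cc_adj _ _ p) tt tt). Qed.

Lemma cc_counit (p : cc_obj A) y x :
  qle (qcomp (cc_ps p y tt) (cc_radj p tt x)) (chom A y x).
Proof.
  eapply qle_trans; [| apply (proj2 (cc_adj _ _ p) y x)].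
  apply (le_qjoin (fun u => qcomp (cc_ps p y u) (cc_radj p u x)) _ tt), qle_refl.
Qed.

(* rho = 1 o rho <= (rho' (x) phi) o rho <= rho' (x) A <= rho' *)
Lemma right_adjoint_le {X : qob Q} (phi : forall y, qhom Q X (cty A y))
  (rho rho' : forall y, qhom Q (cty A y) X) :
  (forall y x, qle (qcomp (phi y) (rho x)) (chom A y x)) ->
  qle (qid X) (\join_ y, qcomp (rho' y) (phi y)) ->
  (forall x x', qle (qcomp (rho' x) (chom A x x')) (rho' x')) ->
  forall x, qle (rho x) (rho' x).
Proof.
  intros Hcounit Hunit Hcompat x.
  eapply qle_trans. { rewrite <- (qcomp1l (rho x)). apply qcomp_monol, Hunit. }
  apply qcomp_joinl_le. intros y. rewrite <- qcompA.
  eapply qle_trans; [apply qcomp_monor, Hcounit | apply Hcompat].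
Qed.

Lemma cc_radj_sym (HS : symmetric A) (p : cc_obj A) :
  sym_left_adjoint (cc_ps p) -> forall x, cc_radj p tt x = qinv (cc_ps p x tt).
Proof.
  intros [Hunit Hcounit] x. apply qle_antisym.
  - apply (right_adjoint_le (fun y => cc_ps p y tt) (fun y => cc_radj p tt y)
             (fun y => qinv (cc_ps p y tt))).
    + intros; apply cc_counit.
    + apply (Hunit tt tt).
    + intros x0 x'. rewrite (HS x0 x'), <- qinv_comp. apply qinv_mono, cc_ps_compat.
  - apply (right_adjoint_le (fun y => cc_ps p y tt) (fun y => qinv (cc_ps p y tt))
             (fun y => cc_radj p tt y)).
    + intros y x0. eapply qle_trans; [| apply (Hcounit y x0)].
      apply (le_qjoin (fun u => qcomp (cc_ps p y u) (qinv (cc_ps p x0 u))) _ tt), qle_refl.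
    + apply cc_unit.
    + intros; apply cc_radj_compat.
Qed.

Lemma Asc_radj (HS : symmetric A) (p : cobj (Asc A)) x :
  cc_radj (proj1_sig p) tt x = qinv (cc_ps (proj1_sig p) x tt).
Proof. exact (cc_radj_sym HS _ (proj2_sig p) x). Qed.

Hypothesis HA : is_QCat A.

Lemma yoneda_ps_dist x : is_dist (A := star (cty A x)) (B := A) (fun y _ => chom A y x).
Proof.
  split.
  - intros; apply (proj1 HA).
  - intros y u u'. cbn. rewrite qcomp1r. apply qle_refl.
Qed.

Lemma yoneda_radj_dist x : is_dist (A := A) (B := star (cty A x)) (fun _ y => chom A x y).
Proof.
  split.
  - intros u' u y. cbn. rewrite qcomp1l. apply qle_refl.
  - intros; apply (proj1 HA).
Qed.

Lemma yoneda_adjoint x :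
  adjoint (A := star (cty A x)) (B := A) (fun y _ => chom A y x) (fun _ y => chom A x y).
Proof.
  split.
  - intros u u'. cbn. apply (le_qjoin (fun y => qcomp (chom A x y) (chom A y x)) _ x).
    rewrite <- (qcomp1l (qid (cty A x))). apply qcomp_mono; apply (proj2 HA).
  - intros y y'. apply qjoin_le. intros []. apply (proj1 HA).
Qed.

Definition yoneda_cc (x : cobj A) : cc_obj A :=
  {| cc_ty := cty A x;
     cc_ps := fun y _ => chom A y x;
     cc_radj := fun _ y => chom A x y;
     cc_ps_dist := yoneda_ps_dist x;
     cc_radj_dist := yoneda_radj_dist x;
     cc_adj := yoneda_adjoint x |}.

Hypothesis HS : symmetric A.

Lemma yoneda_sym_left_adjoint x : sym_left_adjoint (cc_ps (yoneda_cc x)).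
Proof.
  split.
  - intros u u'. cbn. apply (le_qjoin (fun y => qcomp (qinv (chom A y x)) (chom A y x)) _ x).
    rewrite <- HS, <- (qcomp1l (qid (cty A x))). apply qcomp_mono; apply (proj2 HA).
  - intros y y'. unfold didd, dcomp, ddual; cbn. apply qjoin_le. intros _. rewrite <- HS. apply (proj1 HA).
Qed.

Definition yoneda (x : cobj A) : cobj (Asc A) :=
  exist _ (yoneda_cc x) (yoneda_sym_left_adjoint x).

Definition Yoneda : Functor A (Asc A) := {| fmap := yoneda; ftype := fun x => eq_refl |}.

Lemma Asc_hom_yoneda_l x (p : cobj (Asc A)) :
  chom (Asc A) (yoneda x) p = cc_ps (proj1_sig p) x tt.
Proof.
  apply qle_antisym.
  - apply qjoin_le. intros y. apply cc_ps_compat.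
  - apply (le_qjoin (fun y => qcomp (chom A x y) (cc_ps (proj1_sig p) y tt)) _ x).
    rewrite <- (qcomp1l (cc_ps (proj1_sig p) x tt)) at 1. apply qcomp_monol, (proj2 HA).
Qed.

Lemma Asc_hom_yoneda_r x (p : cobj (Asc A)) :
  chom (Asc A) p (yoneda x) = cc_radj (proj1_sig p) tt x.
Proof.
  apply qle_antisym.
  - apply qjoin_le. intros y. apply cc_radj_compat.
  - apply (le_qjoin (fun y => qcomp (cc_radj (proj1_sig p) tt y) (chom A y x)) _ x).
    rewrite <- (qcomp1r (cc_radj (proj1_sig p) tt x)) at 1. apply qcomp_monor, (proj2 HA).
Qed.

Lemma Yoneda_functor : is_functor Yoneda.
Proof.
  intros y x. change (qle (chom A y x) (chom (Asc A) (yoneda y) (yoneda x))).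
  rewrite Asc_hom_yoneda_l. apply qle_refl.
Qed.

End CauchyCompletion.

Section SymmetricCompletion.
Context {Q : Quantaloid} {A : QCat Q}.
Hypothesis (HA : is_QCat A) (HS : symmetric A).

Lemma Asc_QCat : is_QCat (Asc A).
Proof.
  split.
  - intros p q r. apply qcomp_joinl_le. intros z. apply qcomp_joinr_le. intros y.
    apply (le_qjoin (fun y => qcomp (cc_radj (proj1_sig r) tt y) (cc_ps (proj1_sig p) y tt)) _ z).
    rewrite <- !qcompA. apply qcomp_monor. rewrite qcompA.
    eapply qle_trans; [apply qcomp_monol, cc_counit | apply cc_ps_compat].
  - intros p. apply cc_unit.
Qed.

Lemma Asc_symmetric : symmetric (Asc A).
Proof.
  intros q p. cbn. unfold dcomp. rewrite qinv_join. apply eq_qjoin. intros y.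
  rewrite qinv_comp, !(Asc_radj HS), qinv_inv. reflexivity.
Qed.

Lemma Asc_presheaf_expand {X : qob Q} (Phi : presheaf (Asc A) X) :
  is_dist Phi -> forall psi,
  Phi psi tt = \join_ y, qcomp (cc_radj (proj1_sig psi) tt y) (Phi (yoneda HA HS y) tt).
Proof.
  intros [Hcompat _] psi. apply qle_antisym.
  - eapply qle_trans. { rewrite <- (qcomp1l (Phi psi tt)). apply qcomp_monol, cc_unit. }
    apply qcomp_joinl_le. intros y.
    apply (le_qjoin (fun y => qcomp (cc_radj (proj1_sig psi) tt y) (Phi (yoneda HA HS y) tt)) _ y).
    rewrite <- qcompA. apply qcomp_monor.
    rewrite <- (Asc_hom_yoneda_l HA HS y psi). exact (Hcompat (yoneda HA HS y) psi tt).
  - apply qjoin_le. intros y.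
    rewrite <- (Asc_hom_yoneda_r HA HS y psi). exact (Hcompat psi (yoneda HA HS y) tt).
Qed.

Section Restriction.
Context {X : qob Q} (Phi : presheaf (Asc A) X).
Hypothesis (HPhi : is_dist Phi) (HL : sym_left_adjoint Phi).

Lemma restrict_ps_dist : is_dist (A := star X) (B := A) (fun y _ => Phi (yoneda HA HS y) tt).
Proof.
  split.
  - intros y' y []. pose proof (proj1 HPhi (yoneda HA HS y') (yoneda HA HS y) tt) as H.
    rewrite (Asc_hom_yoneda_l HA HS y' (yoneda HA HS y)) in H. exact H.
  - intros y u u'. cbn. rewrite qcomp1r. apply qle_refl.
Qed.

Lemma restrict_radj_dist :
  is_dist (A := A) (B := star X) (fun _ y => qinv (Phi (yoneda HA HS y) tt)).
Proof.
  split.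
  - intros u' u y. cbn. rewrite qcomp1l. apply qle_refl.
  - intros u x x'. rewrite (HS x x'), <- qinv_comp. apply qinv_mono.
    apply (proj1 restrict_ps_dist x' x tt).
Qed.

Lemma restrict_adjoint :
  adjoint (A := star X) (B := A) (fun y _ => Phi (yoneda HA HS y) tt)
    (fun _ y => qinv (Phi (yoneda HA HS y) tt)).
Proof.
  destruct HL as [Hunit Hcounit]. split.
  - intros [] []. cbn. eapply qle_trans; [apply (Hunit tt tt)|].
    apply qjoin_le. intros psi. unfold ddual.
    rewrite (Asc_presheaf_expand Phi HPhi psi) at 2.
    apply qcomp_joinr_le. intros y.
    apply (le_qjoin (fun y => qcomp (qinv (Phi (yoneda HA HS y) tt)) (Phi (yoneda HA HS y) tt)) _ y).
    rewrite qcompA. apply qcomp_monol.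
    rewrite (Asc_radj HS psi), <- qinv_comp. apply qinv_mono.
    rewrite <- (Asc_hom_yoneda_l HA HS y psi). exact (proj1 HPhi (yoneda HA HS y) psi tt).
  - intros y x. apply qjoin_le. intros [].
    pose proof (Hcounit (yoneda HA HS y) (yoneda HA HS x)) as H. unfold didd in H.
    rewrite (Asc_hom_yoneda_l HA HS y (yoneda HA HS x)) in H.
    eapply qle_trans; [| exact H].
    apply (le_qjoin (fun u => qcomp (Phi (yoneda HA HS y) u) (qinv (Phi (yoneda HA HS x) u))) _ tt).
    apply qle_refl.
Qed.

Definition restrict_cc : cc_obj A :=
  {| cc_ty := X;
     cc_ps := fun y _ => Phi (yoneda HA HS y) tt;
     cc_radj := fun _ y => qinv (Phi (yoneda HA HS y) tt);
     cc_ps_dist := restrict_ps_dist;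
     cc_radj_dist := restrict_radj_dist;
     cc_adj := restrict_adjoint |}.

Lemma restrict_represents : representable Phi.
Proof.
  exists (exist _ restrict_cc restrict_adjoint), eq_refl. intros psi.
  exact (Asc_presheaf_expand Phi HPhi psi).
Qed.

End Restriction.

Lemma Asc_sym_complete : sym_complete (Asc A).
Proof. intros X Phi HPhi HL. exact (restrict_represents Phi HPhi HL). Qed.

End SymmetricCompletion.

Section Extension.
Context {Q : Quantaloid} {A B : QCat Q}.
Hypothesis (HA : is_QCat A) (HS : symmetric A) (HB : is_QCat B) (HSB : symmetric B).
Variable F : Functor A B.
Hypothesis HF : is_functor F.

Definition homF (b : cobj B) (y : cobj A) : qhom Q (cty A y) (cty B b) :=
  cast (ftype F y) eq_refl (chom B b (F y)).

Definition ext_presheaf (p : cobj (Asc A)) : presheaf B (cc_ty (proj1_sig p)) :=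
  fun b _ => \join_ y, qcomp (homF b y) (cc_ps (proj1_sig p) y tt).

Lemma le_ext_presheaf (p : cobj (Asc A)) y :
  qle (cc_ps (proj1_sig p) y tt) (cast eq_refl (ftype F y) (ext_presheaf p (F y) tt)).
Proof.
  unfold ext_presheaf. rewrite cast_join.
  apply (le_qjoin (fun y0 => cast eq_refl (ftype F y)
                     (qcomp (homF (F y) y0) (cc_ps (proj1_sig p) y0 tt))) _ y).
  rewrite <- (cast_comp eq_refl eq_refl (ftype F y)). cbn. unfold homF.
  rewrite <- (qcomp1l (cc_ps (proj1_sig p) y tt)) at 1.
  apply qcomp_monol. eapply qle_trans; [apply (proj2 HA)|].
  pose proof (HF y y) as Hyy. rewrite cast_split in Hyy. exact Hyy.
Qed.

Lemma ext_presheaf_dist (p : cobj (Asc A)) : is_dist (ext_presheaf p).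
Proof.
  split.
  - intros b' b u. apply qcomp_joinr_le. intros y.
    apply (le_qjoin (fun y => qcomp (homF b' y) (cc_ps (proj1_sig p) y tt)) _ y).
    rewrite qcompA. apply qcomp_monol. unfold homF. rewrite cast_compl.
    apply cast_mono, (proj1 HB).
  - intros b u u'. cbn. rewrite qcomp1r. apply qle_refl.
Qed.

Lemma ext_presheaf_sym_left_adjoint (p : cobj (Asc A)) :
  sym_left_adjoint (ext_presheaf p).
Proof.
  split.
  - intros [] []. cbn. eapply qle_trans; [apply cc_unit|]. apply qjoin_le. intros y.
    apply (le_qjoin (fun b => qcomp (qinv (ext_presheaf p b tt)) (ext_presheaf p b tt)) _ (F y)).
    rewrite (Asc_radj HS p).
    pose proof (le_ext_presheaf p y) as H.
    eapply qle_trans. { apply qcomp_mono; [exact H | apply qinv_mono, H]. }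
    rewrite cast_inv, cast_comp. apply qle_refl.
  - intros b b'. apply qjoin_le. intros u. unfold ddual, ext_presheaf at 2.
    rewrite qinv_join. apply qcomp_joinr_le. intros z.
    apply qcomp_joinl_le. intros y.
    rewrite qinv_comp, <- !qcompA, (qcompA (cc_ps (proj1_sig p) y tt)), <- (Asc_radj HS p).
    eapply qle_trans. { apply qcomp_monor, qcomp_monol, cc_counit. }
    eapply qle_trans. { apply qcomp_monor, qcomp_monol, (HF y z). }
    unfold homF. rewrite cast_inv, <- HSB, !cast_comp. cbn.
    eapply qle_trans; [apply qcomp_monor, (proj1 HB) | apply (proj1 HB)].
Qed.

Section FromRepresentatives.
Variables (Gm : cobj (Asc A) -> cobj B) (Ge : forall p, cty B (Gm p) = cc_ty (proj1_sig p)).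
Hypothesis HG : forall p b, ext_presheaf p b tt = cast (Ge p) eq_refl (chom B b (Gm p)).

Let G : Functor (Asc A) B := {| fmap := Gm; ftype := Ge |}.

Lemma cast_represented p b Y (e : cty B b = Y) :
  cast (Ge p) e (chom B b (Gm p)) = cast eq_refl e (ext_presheaf p b tt).
Proof. rewrite cast_split, HG. reflexivity. Qed.

Lemma extension_functor : is_functor G.
Proof.
  intros q p. cbn [fmap ftype G]. rewrite cast_represented. unfold ext_presheaf.
  rewrite cast_join. apply qjoin_le. intros y.
  apply (le_qjoin (fun y0 => cast eq_refl (Ge q)
                     (qcomp (homF (Gm q) y0) (cc_ps (proj1_sig p) y0 tt))) _ y).
  rewrite <- (cast_comp eq_refl eq_refl (Ge q)). apply qcomp_monol.
  unfold homF. rewrite <- (cast_split (ftype F y) (Ge q)).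
  rewrite (HSB (Gm q) (F y)), <- cast_inv, (Asc_radj HS q).
  apply qinv_mono. rewrite cast_represented. apply le_ext_presheaf.
Qed.

Lemma extension_restricts : fiso (fcomp G (Yoneda HA HS)) F.
Proof.
  intros x. cbn [G fcomp fmap ftype eq_trans Yoneda].
  assert (Hx : qle (qid (cty A x)) (cast eq_refl (ftype F x)
                 (ext_presheaf (yoneda HA HS x) (F x) tt))).
  { eapply qle_trans; [| apply (le_ext_presheaf (yoneda HA HS x) x)]. apply (proj2 HA). }
  split.
  - rewrite (HSB (Gm _) (F x)), <- cast_inv, <- qinv_id. apply qinv_mono.
    rewrite cast_represented. exact Hx.
  - rewrite cast_represented. exact Hx.
Qed.

End FromRepresentatives.

Lemma exists_extension : sym_complete B ->
  exists G : Functor (Asc A) B, is_functor G /\ fiso (fcomp G (Yoneda HA HS)) F.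
Proof.
  intros HC.
  assert (Hrep : forall p, exists r : {b : cobj B & cty B b = cc_ty (proj1_sig p)},
             forall b, ext_presheaf p b tt = cast (projT2 r) eq_refl (chom B b (projT1 r))).
  { intros p.
    destruct (HC _ _ (ext_presheaf_dist p) (ext_presheaf_sym_left_adjoint p)) as (b & e & H).
    exists (existT _ b e). exact H. }
  pose (r p := constructive_indefinite_description _ (Hrep p)).
  pose proof (fun p => proj2_sig (r p)) as HG.
  exists (@Build_Functor Q (Asc A) B (fun p => projT1 (proj1_sig (r p)))
                                     (fun p => projT2 (proj1_sig (r p)))).
  split; [exact (extension_functor _ _ HG) | exact (extension_restricts _ _ HG)].
Qed.

End Extension.

(* 1_p <= p^* (x) p = \/_y A_sc(Yy, p) o A_sc(p, Yy), and each term passes through G(Yy) --> G'(Yy). *)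
Lemma extension_half_unique {Q : Quantaloid} {A B : QCat Q}
  (HA : is_QCat A) (HS : symmetric A) (HB : is_QCat B) (G G' : Functor (Asc A) B) :
  is_functor G -> is_functor G' ->
  (forall y, qle (qid (cty A y))
               (cast (ftype G' (yoneda HA HS y)) (ftype G (yoneda HA HS y))
                  (chom B (G (yoneda HA HS y)) (G' (yoneda HA HS y))))) ->
  forall p, qle (qid (cc_ty (proj1_sig p))) (cast (ftype G' p) (ftype G p) (chom B (G p) (G' p))).
Proof.
  intros HG HG' Hy p.
  eapply qle_trans; [apply cc_unit|]. apply qjoin_le. intros y.
  rewrite <- (Asc_hom_yoneda_r HA HS y p), <- (Asc_hom_yoneda_l HA HS y p).
  rewrite <- (qcomp1l (chom (Asc A) (yoneda HA HS y) p)).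
  eapply qle_trans.
  { apply qcomp_mono; [apply qcomp_mono; [apply (HG' (yoneda HA HS y) p) | apply (Hy y)]
                     | apply (HG p (yoneda HA HS y))]. }
  rewrite !cast_comp. apply cast_mono.
  eapply qle_trans; [apply qcomp_monor, (proj1 HB) | apply (proj1 HB)].
Qed.

Lemma extension_unique {Q : Quantaloid} {A B : QCat Q}
  (HA : is_QCat A) (HS : symmetric A) (HB : is_QCat B) (G G' : Functor (Asc A) B) :
  is_functor G -> is_functor G' ->
  fiso (fcomp G (Yoneda HA HS)) (fcomp G' (Yoneda HA HS)) -> fiso G G'.
Proof.
  intros HG HG' Hiso p. split.
  - apply (extension_half_unique HA HS HB G G' HG HG'). intros y. apply (proj1 (Hiso y)).
  - apply (extension_half_unique HA HS HB G' G HG' HG). intros y. apply (proj2 (Hiso y)).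
Qed.

Theorem proposition3p3 (Q : Quantaloid) (A : QCat Q) :
  is_QCat A -> symmetric A ->
  (* A_sc is an object of the full subcategory of symmetrically complete
     symmetric Q-categories *)
  is_QCat (Asc A) /\ symmetric (Asc A) /\ sym_complete (Asc A) /\
  (* the unit Y_A : A -> A_sc, x |-> A(-,x) *)
  exists Y : Functor A (Asc A),
    is_functor Y /\
    (forall x y, cast (ftype Y x) eq_refl (cc_ps (proj1_sig (Y x)) y tt)
                 = chom A y x) /\
    (* universal property (reflection, up to isomorphism of functors) *)
    (forall B : QCat Q, is_QCat B -> symmetric B -> sym_complete B ->
       (forall F : Functor A B, is_functor F ->
          exists G : Functor (Asc A) B, is_functor G /\ fiso (fcomp G Y) F) /\
       (forall G G' : Functor (Asc A) B, is_functor G -> is_functor G' ->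
          fiso (fcomp G Y) (fcomp G' Y) -> fiso G G')).
Proof.
  intros HA HS.
  split; [exact Asc_QCat |].
  split; [exact (Asc_symmetric HS) |].
  split; [exact (Asc_sym_complete HA HS) |].
  exists (Yoneda HA HS). split; [exact (Yoneda_functor HA HS) |].
  split; [reflexivity |].
  intros B HB HSB HC. split.
  - intros F HF. exact (exists_extension HA HS HB HSB F HF HC).
  - exact (extension_unique HA HS HB).
Qed.
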